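(* Let $r,n\in\mathbb{N}$ with $$e\left(\tfrac{1}{2}\log(2n-1)+1\right)\leq r\leq n.$$ Then for any $s_1,\ldots,s_r\in\mathbb{N}$, $\overline{H}_n(s_1,\ldots,s_r)$ is not an integer.
   Context: $\mathbb{N}$ is the set of positive integers, $\log$ is the natural logarithm, and $\overline{H}_n(s_1,\ldots,s_r)=\sum_{0\leq k_1<\cdots<k_r\leq n-1}\prod_{j=1}^r (2k_j+1)^{-s_j}$. *)

From Stdlib Require Import Reals List ZArith.
Open Scope R_scope.

(* Hbar_from lo n s = sum over lo <= k_1 < ... < k_r <= n-1 of
   prod_j (2 k_j + 1)^(- s_j), where s = [s_1; ...; s_r]. *)
Fixpoint Hbar_from (lo n : nat) (s : list nat) : R :=
  match s with
  | nil => 1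
  | s1 :: rest =>
      fold_right Rplus 0
        (map (fun k => / (INR (2 * k + 1) ^ s1) * Hbar_from (S k) n rest)
             (seq lo (n - lo)))
  end.

Definition Hbar (n : nat) (s : list nat) : R := Hbar_from 0 n s.

(* Since every s_j >= 1, Hbar_n(s_1,...,s_r) is at most Hbar_n(1,...,1), the r-th
   elementary symmetric function of the numbers 1/(2k+1), k < n.  That function is
   at most T^r / r!, where T = sum_{k<n} 1/(2k+1) <= 1 + ln(2n-1)/2.  The hypothesis
   gives e T <= r, and r^r < r! e^r, so Hbar_n(s) < 1; as r <= n it is also
   positive, hence not an integer. *)

From Stdlib Require Import Reals List ZArith Lra Lia.
Open Scope R_scope.

Section ListSums.

Variable A : Type.

Lemma fold_sum_nonneg (f : A -> R) (l : list A) :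
  (forall x, In x l -> 0 <= f x) -> 0 <= fold_right Rplus 0 (map f l).
Proof.
  induction l as [|a l IH]; simpl; intros Hf; [lra|].
  assert (0 <= f a) by (apply Hf; left; reflexivity).
  assert (0 <= fold_right Rplus 0 (map f l)) by (apply IH; intros; apply Hf; right; assumption).
  lra.
Qed.

Lemma fold_sum_le (f g : A -> R) (l : list A) :
  (forall x, In x l -> f x <= g x) ->
  fold_right Rplus 0 (map f l) <= fold_right Rplus 0 (map g l).
Proof.
  induction l as [|a l IH]; simpl; intros Hfg; [lra|].
  assert (f a <= g a) by (apply Hfg; left; reflexivity).
  assert (fold_right Rplus 0 (map f l) <= fold_right Rplus 0 (map g l))
    by (apply IH; intros; apply Hfg; right; assumption).
  lra.
Qed.

Lemma fold_sum_mult_r (f : A -> R) (c : R) (l : list A) :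
  fold_right Rplus 0 (map (fun x => f x * c) l) = fold_right Rplus 0 (map f l) * c.
Proof. induction l as [|a l IH]; simpl; [ring|]. rewrite IH; ring. Qed.

Lemma fold_sum_app (f : A -> R) (l1 l2 : list A) :
  fold_right Rplus 0 (map f (l1 ++ l2)) =
  fold_right Rplus 0 (map f l1) + fold_right Rplus 0 (map f l2).
Proof. induction l1 as [|a l IH]; simpl; [ring|]. rewrite IH; ring. Qed.

End ListSums.

Lemma seq_sub_cons (lo n : nat) :
  (lo < n)%nat -> seq lo (n - lo) = lo :: seq (S lo) (n - S lo).
Proof. intros H. replace (n - lo)%nat with (S (n - S lo)) by lia. reflexivity. Qed.

Lemma pow_add_ge_linear_term (x y : R) (m : nat) : 0 <= x -> 0 <= y ->
  y ^ S m + INR (S m) * (x * y ^ m) <= (x + y) ^ S m.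
Proof.
  intros Hx Hy. induction m as [|m IH]; [simpl; lra|].
  rewrite S_INR.
  change ((x + y) ^ S (S m)) with ((x + y) * (x + y) ^ S m).
  change (y ^ S (S m)) with (y * y ^ S m).
  change (y ^ S m) with (y * y ^ m) in *.
  assert (0 <= y ^ m) by (apply pow_le; assumption).
  assert (0 <= INR (S m)) by apply pos_INR.
  set (Y := y ^ m) in *. set (P := (x + y) ^ S m) in *. set (N := INR (S m)) in *.
  assert ((x + y) * (y * Y + N * (x * Y)) <= (x + y) * P)
    by (apply Rmult_le_compat_l; lra).
  assert (0 <= N * (x * (x * Y))) by (repeat apply Rmult_le_pos; assumption).
  nra.
Qed.

Lemma ln_le_sub_1 (y : R) : 0 < y -> ln y <= y - 1.
Proof.
  intros Hy. pose proof (exp_ineq1_le (ln y)) as Hexp.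
  rewrite exp_ln in Hexp by exact Hy. lra.
Qed.

Lemma pow_self_lt_fact_mult_exp (r : nat) :
  (1 <= r)%nat -> INR r ^ r < INR (fact r) * exp 1 ^ r.
Proof.
  induction r as [|r IH]; intros Hr; [lia|].
  destruct (Nat.eq_dec r 0) as [->|Hr0].
  { simpl. pose proof (exp_ineq1 1 ltac:(lra)). lra. }
  specialize (IH ltac:(lia)).
  assert (Hrpos : 0 < INR r) by (apply lt_0_INR; lia).
  (* (1 + 1/r)^r <= exp(1/r)^r = e *)
  assert (Hsucc : INR (S r) ^ r <= INR r ^ r * exp 1).
  { replace (INR (S r)) with (INR r * (1 + / INR r)) by (rewrite S_INR; field; lra).
    rewrite Rpow_mult_distr. apply Rmult_le_compat_l; [apply pow_le; lra|].
    replace (exp 1) with (exp (/ INR r) ^ r).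
    - apply pow_incr. split; [|apply exp_ineq1_le].
      assert (0 < / INR r) by (apply Rinv_0_lt_compat; assumption). lra.
    - rewrite <- Rpower_pow by apply exp_pos. unfold Rpower.
      rewrite ln_exp. f_equal. field. lra. }
  change (INR (S r) ^ S r) with (INR (S r) * INR (S r) ^ r).
  change (exp 1 ^ S r) with (exp 1 * exp 1 ^ r).
  rewrite fact_simpl, mult_INR.
  assert (0 < exp 1) by apply exp_pos.
  assert (0 < INR (S r)) by (apply lt_0_INR; lia).
  assert (INR r ^ r * exp 1 < INR (fact r) * exp 1 ^ r * exp 1)
    by (apply Rmult_lt_compat_r; assumption).
  apply Rle_lt_trans with (INR (S r) * (INR r ^ r * exp 1)); nra.
Qed.

Definition odd_harmonic (lo n : nat) : R :=
  fold_right Rplus 0 (map (fun k => / INR (2 * k + 1)) (seq lo (n - lo))).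

Lemma INR_odd_pos (k : nat) : 0 < INR (2 * k + 1).
Proof. apply lt_0_INR; lia. Qed.

Lemma inv_INR_odd_pos (k : nat) : 0 < / INR (2 * k + 1).
Proof. apply Rinv_0_lt_compat, INR_odd_pos. Qed.

Lemma inv_pow_INR_odd_pos (k e : nat) : 0 < / INR (2 * k + 1) ^ e.
Proof. apply Rinv_0_lt_compat, pow_lt, INR_odd_pos. Qed.

Lemma odd_harmonic_nonneg (lo n : nat) : 0 <= odd_harmonic lo n.
Proof. apply fold_sum_nonneg. intros k _. left; apply inv_INR_odd_pos. Qed.

Lemma odd_harmonic_cons (lo n : nat) :
  (lo < n)%nat -> odd_harmonic lo n = / INR (2 * lo + 1) + odd_harmonic (S lo) n.
Proof. intros H. unfold odd_harmonic. rewrite (seq_sub_cons lo n H). reflexivity. Qed.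

Lemma odd_harmonic_0_succ (n : nat) :
  odd_harmonic 0 (S n) = odd_harmonic 0 n + / INR (2 * n + 1).
Proof. unfold odd_harmonic. rewrite !Nat.sub_0_r, seq_S, fold_sum_app. simpl. ring. Qed.

Lemma inv_odd_le_half_ln_ratio (k : nat) : (1 <= k)%nat ->
  / INR (2 * k + 1) <= / 2 * (ln (INR (2 * k + 1)) - ln (INR (2 * k - 1))).
Proof.
  intros Hk.
  assert (Hk1 : 1 <= INR k) by (apply (le_INR 1); exact Hk).
  assert (Hp : INR (2 * k + 1) = 2 * INR k + 1) by (rewrite plus_INR, mult_INR; simpl; ring).
  assert (Hm : INR (2 * k - 1) = 2 * INR k - 1)
    by (rewrite minus_INR, mult_INR by lia; simpl; ring).
  rewrite Hp, Hm.
  set (q := (2 * INR k - 1) / (2 * INR k + 1)).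
  assert (Hq : 0 < q) by (unfold q; apply Rdiv_lt_0_compat; lra).
  (* ln q <= q - 1 = -2/(2k+1) *)
  pose proof (ln_le_sub_1 q Hq) as Hln.
  unfold q, Rdiv in Hln. rewrite ln_mult, ln_Rinv in Hln by (try apply Rinv_0_lt_compat; lra).
  replace ((2 * INR k - 1) * / (2 * INR k + 1) - 1) with (- 2 * / (2 * INR k + 1)) in Hln
    by (field; lra).
  lra.
Qed.

Lemma odd_harmonic_le_ln (n : nat) :
  (1 <= n)%nat -> odd_harmonic 0 n <= 1 + / 2 * ln (INR (2 * n - 1)).
Proof.
  induction n as [|n IH]; intros Hn; [lia|].
  destruct (Nat.eq_dec n 0) as [->|Hn0].
  { unfold odd_harmonic. simpl. rewrite ln_1. lra. }
  rewrite odd_harmonic_0_succ.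
  replace (2 * S n - 1)%nat with (2 * n + 1)%nat by lia.
  pose proof (IH ltac:(lia)).
  pose proof (inv_odd_le_half_ln_ratio n ltac:(lia)).
  lra.
Qed.

Lemma Hbar_from_nonneg (n : nat) (s : list nat) (lo : nat) : 0 <= Hbar_from lo n s.
Proof.
  revert lo; induction s as [|e s IH]; intros lo; cbn [Hbar_from]; [lra|].
  apply fold_sum_nonneg; intros k _.
  apply Rmult_le_pos; [left; apply inv_pow_INR_odd_pos | apply IH].
Qed.

Lemma Hbar_from_pos (n : nat) (s : list nat) (lo : nat) :
  (length s + lo <= n)%nat -> 0 < Hbar_from lo n s.
Proof.
  revert lo; induction s as [|e s IH]; intros lo Hlen; cbn [Hbar_from]; [lra|].
  simpl in Hlen. rewrite (seq_sub_cons lo n) by lia. cbn [map fold_right].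
  apply Rplus_lt_le_0_compat.
  - apply Rmult_lt_0_compat; [apply inv_pow_INR_odd_pos | apply IH; lia].
  - apply fold_sum_nonneg; intros k _.
    apply Rmult_le_pos; [left; apply inv_pow_INR_odd_pos | apply Hbar_from_nonneg].
Qed.

Lemma Hbar_from_le_ones (n : nat) (s : list nat) (lo : nat) :
  (forall e, In e s -> (1 <= e)%nat) ->
  Hbar_from lo n s <= Hbar_from lo n (repeat 1%nat (length s)).
Proof.
  revert lo; induction s as [|e s IH]; intros lo Hs; [apply Rle_refl|].
  cbn [Hbar_from length repeat].
  apply fold_sum_le; intros k _.
  apply Rmult_le_compat; [left; apply inv_pow_INR_odd_pos | apply Hbar_from_nonneg | |].
  - apply Rinv_le_contravar; [apply pow_lt, INR_odd_pos|].
    apply Rle_pow; [apply (le_INR 1); lia | apply Hs; left; reflexivity].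
  - apply IH. intros; apply Hs; right; assumption.
Qed.

(* Sum of (x + y)^(m+1) >= y^(m+1) + (m+1) x y^m over the splittings
   odd_harmonic k n = 1/(2k+1) + odd_harmonic (S k) n. *)
Lemma odd_harmonic_pow_ge_telescope (n m lo : nat) :
  INR (S m) * fold_right Rplus 0
    (map (fun k => / INR (2 * k + 1) * odd_harmonic (S k) n ^ m) (seq lo (n - lo)))
  <= odd_harmonic lo n ^ S m.
Proof.
  remember (n - lo)%nat as d eqn:Hd. revert lo Hd.
  induction d as [|d IH]; intros lo Hd; cbn [seq map fold_right].
  - rewrite Rmult_0_r. apply pow_le, odd_harmonic_nonneg.
  - rewrite (odd_harmonic_cons lo n) by lia.
    specialize (IH (S lo) ltac:(lia)).
    pose proof (pow_add_ge_linear_term (/ INR (2 * lo + 1)) (odd_harmonic (S lo) n) m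
                  (Rlt_le _ _ (inv_INR_odd_pos lo)) (odd_harmonic_nonneg (S lo) n)).
    rewrite Rmult_plus_distr_l. lra.
Qed.

Lemma Hbar_from_ones_mult_fact_le (n m lo : nat) :
  Hbar_from lo n (repeat 1%nat m) * INR (fact m) <= odd_harmonic lo n ^ m.
Proof.
  revert lo; induction m as [|m IH]; intros lo; [simpl; lra|].
  cbn [repeat Hbar_from]. rewrite fact_simpl, mult_INR.
  assert (Hterm : fold_right Rplus 0
     (map (fun k => / INR (2 * k + 1) ^ 1 * Hbar_from (S k) n (repeat 1%nat m))
        (seq lo (n - lo))) * INR (fact m) <=
     fold_right Rplus 0
     (map (fun k => / INR (2 * k + 1) * odd_harmonic (S k) n ^ m) (seq lo (n - lo)))).
  { rewrite <- fold_sum_mult_r. apply fold_sum_le; intros k _.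
    rewrite pow_1, Rmult_assoc.
    apply Rmult_le_compat_l; [left; apply inv_INR_odd_pos | apply IH]. }
  pose proof (odd_harmonic_pow_ge_telescope n m lo).
  pose proof (pos_INR (S m)).
  nra.
Qed.

Lemma odd_harmonic_pow_lt_fact (r n : nat) :
  (1 <= r)%nat -> (1 <= n)%nat ->
  exp 1 * (/ 2 * ln (INR (2 * n - 1)) + 1) <= INR r ->
  odd_harmonic 0 n ^ r < INR (fact r).
Proof.
  intros Hr Hn Hbound.
  pose proof (odd_harmonic_le_ln n Hn).
  pose proof (odd_harmonic_nonneg 0 n).
  assert (He : 0 < exp 1) by apply exp_pos.
  assert (Hle : (odd_harmonic 0 n * exp 1) ^ r <= INR r ^ r)
    by (apply pow_incr; split; nra).
  rewrite Rpow_mult_distr in Hle.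
  pose proof (pow_self_lt_fact_mult_exp r Hr).
  apply (Rmult_lt_reg_r (exp 1 ^ r)); [apply pow_lt, He | lra].
Qed.

Lemma not_IZR_between_0_1 (x : R) : 0 < x < 1 -> ~ (exists z : Z, x = IZR z).
Proof.
  intros [H0 H1] [z ->].
  apply lt_IZR in H0. apply lt_IZR in H1. lia.
Qed.

Theorem lemma2p3 (r n : nat) (s : list nat) :
  (1 <= r)%nat -> (1 <= n)%nat ->
  exp 1 * (/ 2 * ln (INR (2 * n - 1)) + 1) <= INR r ->
  (r <= n)%nat ->
  length s = r ->
  (forall x, In x s -> (1 <= x)%nat) ->
  ~ (exists z : Z, Hbar n s = IZR z).
Proof.
  intros Hr Hn Hbound Hrn Hlen Hs.
  apply not_IZR_between_0_1. unfold Hbar. split.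
  - apply Hbar_from_pos. lia.
  - pose proof (Hbar_from_le_ones n s 0 Hs) as Hones.
    pose proof (Hbar_from_ones_mult_fact_le n r 0) as Hesym.
    pose proof (odd_harmonic_pow_lt_fact r n Hr Hn Hbound).
    assert (0 < INR (fact r)) by (apply lt_0_INR, lt_O_fact).
    rewrite Hlen in Hones.
    apply Rle_lt_trans with (Hbar_from 0 n (repeat 1%nat r)); [exact Hones|].
    apply (Rmult_lt_reg_r (INR (fact r))); lra.
Qed.
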